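(* Suppose the standing assumptions (1)–(5) below hold, and that $m$ nodes, possibly lying in different training graphs, request entire node removal at the same time, where $m<\min_i g_i$. That is, the updated dataset is $\mathcal{D}'=(\mathbf{Z}',\mathbf{y})$ where for each affected graph $\mathcal{G}_i$, $\mathbf{z}_i'=\Phi(\mathbf{S}_i',\mathbf{x}_i')$ with $\mathbf{x}_i'$ obtained from $\mathbf{x}_i$ by zeroing the entries of the removed nodes of $\mathcal{G}_i$ and $\mathbf{S}_i'$ obtained from $\mathbf{S}_i$ by zeroing the rows and columns of those nodes, and $\mathbf{z}_i'=\mathbf{z}_i$ for unaffected graphs. Then the updated model $\mathbf{w}'=\mathbf{w}^\star+\mathbf{H}_{\mathbf{w}^\star}^{-1}\Delta$ satisfies $$\|\nabla L(\mathbf{w}',\mathcal{D}')\|\leq\frac{4\gamma_2 m^2C_1^2F^3}{\lambda^2 n},\qquad F=\sqrt{\sum_{l=0}^{L-1}B^{2l}},$$ where $B$ is the upper frame constant of the graph wavelets used in the GST.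
   Context: Setting (graph classification). There are $n$ training graphs $\mathcal{G}_1,\dots,\mathcal{G}_n$. Graph $\mathcal{G}_i$ has $g_i$ nodes, a symmetric adjacency matrix $\mathbf{S}_i\in\mathbb{R}^{g_i\times g_i}$ (the graph shift operator), a node signal $\mathbf{x}_i\in\mathbb{R}^{g_i}$ (one scalar feature per node) and a label $y_i$. Graph scattering transform (GST). Fix positive integers $J,L$ and wavelet kernel functions $h_1,\dots,h_J:\mathbb{R}\to\mathbb{R}$. For a symmetric $\mathbf{S}=\mathbf{V}\mathbf{\Lambda}\mathbf{V}^T$ with eigenvalues $\lambda_1,\dots,\lambda_g$, set $\mathbf{H}_j(\mathbf{S})=\mathbf{V}\,\mathrm{diag}(h_j(\lambda_1),\dots,h_j(\lambda_g))\mathbf{V}^T$. The wavelets form a frame: there are constants $0<A\le B$ with $A^2\|\mathbf{x}\|^2\le\sum_{j=1}^J\|\mathbf{H}_j(\mathbf{S})\mathbf{x}\|^2\le B^2\|\mathbf{x}\|^2$ for all $\mathbf{x}$ (for all shift operators considered). Let $\rho$ be the entrywise absolute value. For a path $p=(j_1,\dots,j_l)$ with $j_k\in\{1,\dots,J\}$ and $0\le l\le L-1$, define $\Phi_{()}(\mathbf{S},\mathbf{x})=\mathbf{x}$ and $\Phi_{(j_1,\dots,j_l)}(\mathbf{S},\mathbf{x})=\rho\big(\mathbf{H}_{j_l}(\mathbf{S})\Phi_{(j_1,\dots,j_{l-1})}(\mathbf{S},\mathbf{x})\big)$, and the scalar coefficient $\phi_p(\mathbf{S},\mathbf{x})=U\Phi_p(\mathbf{S},\mathbf{x})$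 with the averaging operator $U=\frac{1}{g}\mathbf{1}^T$ ($g$ the number of nodes). The embedding $\Phi(\mathbf{S},\mathbf{x})\in\mathbb{R}^d$, $d=\sum_{l=0}^{L-1}J^l$, is the concatenation of all $\phi_p(\mathbf{S},\mathbf{x})$. Set $\mathbf{z}_i=\Phi(\mathbf{S}_i,\mathbf{x}_i)$, let $\mathbf{Z}$ have rows $\mathbf{z}_i^T$, and $\mathcal{D}=(\mathbf{Z},\mathbf{y})$. Learning and update. $\ell(s,y)$ is convex and twice differentiable in $s$; $\ell'$, $\ell''$ denote derivatives in $s$, and $\nabla$, $\nabla^2$ denote gradient/Hessian in $\mathbf{w}$. For a dataset $\mathcal{D}=(\mathbf{Z},\mathbf{y})$, $L(\mathbf{w},\mathcal{D})=\sum_{i=1}^n\big(\ell(\mathbf{w}^T\mathbf{z}_i,y_i)+\frac{\lambda}{2}\|\mathbf{w}\|^2\big)$ with $\lambda>0$, and $\mathbf{w}^\star=\arg\min_{\mathbf{w}}L(\mathbf{w},\mathcal{D})$. For the updated dataset $\mathcal{D}'$, set $\mathbf{H}_{\mathbf{w}^\star}=\nabla^2L(\mathbf{w}^\star,\mathcal{D}')$ and $\Delta=\nabla L(\mathbf{w}^\star,\mathcal{D})-\nabla L(\mathbf{w}^\star,\mathcal{D}')$. Norms are $\ell_2$ for vectors and operator norm for matrices. Standing assumptions: there are constants $C_1,C_2,\gamma_1,\gamma_2$ such that for every embedding $\mathbf{z}_i$ (of $\mathcal{D}$ or $\mathcal{D}'$) and every $\mathbf{w}\in\mathbb{R}^d$: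 (1) $\|\nabla\ell(\mathbf{w}^T\mathbf{z}_i,y_i)\|\le C_1$; (2) $|\ell'(\mathbf{w}^T\mathbf{z}_i,y_i)|\le C_2$; (3) $\ell'$ is $\gamma_1$-Lipschitz; (4) $\ell''$ is $\gamma_2$-Lipschitz; (5) the signals satisfy $|[\mathbf{x}_i]_j|\le1$ for all $i$ and all $j\in\{1,\dots,g_i\}$. *)

From HB Require Import structures.
From mathcomp Require Import all_boot all_order all_algebra.
From mathcomp Require Import all_classical all_reals all_analysis.
Set Implicit Arguments. Unset Strict Implicit. Unset Printing Implicit Defensive.
Import Order.TTheory GRing.Theory Num.Theory.
Local Open Scope ring_scope.

Section GSTDefs.
Variable R : realType.

Definition vdot d (u v : 'cV[R]_d) : R := \sum_(k < d) u k 0 * v k 0.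
Definition vnorm d (u : 'cV[R]_d) : R := Num.sqrt (vdot u u).

(* Spectral filter h(S) = V diag(h(lambda_1),...,h(lambda_g)) V^T, computed from
   a (classically chosen) orthogonal eigendecomposition S = V diag(lambda) V^T;
   the result does not depend on the chosen decomposition.  Symmetric real
   matrices always have one (spectral theorem); otherwise the value is 0. *)
Definition specdec g (S : 'M[R]_g) (VL : 'M[R]_g * 'rV[R]_g) : Prop :=
  VL.1 *m VL.1^T = 1%:M /\ S = VL.1 *m diag_mx VL.2 *m VL.1^T.

Definition wav (h : R -> R) g (S : 'M[R]_g) : 'M[R]_g :=
  match pselect (exists VL, specdec S VL) with
  | left e => let VL := proj1_sig (cid e) in
              VL.1 *m diag_mx (map_mx h VL.2) *m VL.1^T
  | right _ => 0
  end.

Definition gst_path (L J : nat) := {l : 'I_L & l.-tuple 'I_J}.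
Definition npaths (L J : nat) : nat := #|{: gst_path L J}|.

Definition gst_step J g (h : 'I_J -> R -> R) (S : 'M[R]_g) (v : 'cV[R]_g) (j : 'I_J)
  : 'cV[R]_g := map_mx (fun a => `|a|) (wav (h j) S *m v).

Definition gst_Phi J g (h : 'I_J -> R -> R) (S : 'M[R]_g) (x : 'cV[R]_g)
  (p : seq 'I_J) : 'cV[R]_g := foldl (gst_step h S) x p.

Definition gst_coef J g (h : 'I_J -> R -> R) (S : 'M[R]_g) (x : 'cV[R]_g)
  (p : seq 'I_J) : R := (g%:R)^-1 * \sum_(k < g) gst_Phi h S x p k 0.

(* The GST embedding Phi(S,x) in R^d, d = #paths = sum_{l<L} J^l,
   coordinates indexed by a fixed enumeration of the paths *)
Definition gst (L J : nat) g (h : 'I_J -> R -> R) (S : 'M[R]_g) (x : 'cV[R]_g)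
  : 'cV[R]_(npaths L J) :=
  \col_(k < npaths L J) gst_coef h S x (tagged (@enum_val _ (mem predT) k)).

Definition remove_signal g (Rm : {set 'I_g}) (x : 'cV[R]_g) : 'cV[R]_g :=
  \col_(k < g) (if k \in Rm then 0 else x k 0).
Definition remove_shift g (Rm : {set 'I_g}) (S : 'M[R]_g) : 'M[R]_g :=
  \matrix_(a < g, b < g) (if (a \in Rm) || (b \in Rm) then 0 else S a b).

Definition Lobj (Y : Type) n d (ell : R -> Y -> R) (lam : R)
  (Z : 'I_n -> 'cV[R]_d) (y : 'I_n -> Y) (w : 'cV[R]_d) : R :=
  \sum_(i < n) (ell (vdot w (Z i)) (y i) + lam / 2 * vnorm w ^+ 2).

(* gradient in w (chain rule, ell' = derivative of ell in s) *)
Definition gradL (Y : Type) n d (dl : R -> Y -> R) (lam : R)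
  (Z : 'I_n -> 'cV[R]_d) (y : 'I_n -> Y) (w : 'cV[R]_d) : 'cV[R]_d :=
  \sum_(i < n) (dl (vdot w (Z i)) (y i) *: Z i + lam *: w).

(* Hessian in w (ell'' = second derivative of ell in s) *)
Definition hessL (Y : Type) n d (d2l : R -> Y -> R) (lam : R)
  (Z : 'I_n -> 'cV[R]_d) (y : 'I_n -> Y) (w : 'cV[R]_d) : 'M[R]_d :=
  \sum_(i < n) (d2l (vdot w (Z i)) (y i) *: (Z i *m (Z i)^T) + lam%:M).

End GSTDefs.

From HB Require Import structures.
From mathcomp Require Import all_boot all_order all_algebra.
From mathcomp Require Import all_classical all_reals all_analysis.
From mathcomp Require Import ring lra.
Import Order.TTheory GRing.Theory Num.Theory.
Local Open Scope ring_scope.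
Set Implicit Arguments.
Unset Strict Implicit.

(* Since w* minimises L(., D), grad L(w*, D) = 0, so Delta = - grad L(w*, D')
   and w' is one Newton step for L(., D') from w*.  Its gradient is the
   second-order Taylor remainder sum_i r_i z'_i with |r_i| <= gam2 (z'_i . v)^2,
   where v = w' - w*.  Convexity of the loss gives ell'' >= 0, hence
   H >= lam n I and |v| <= |Delta| / (lam n).  Only graphs that lose nodes
   contribute to Delta, each by at most 2 C1, so |Delta| <= 2 C1 m.  Finally the
   frame bound gives |z'_i|^2 <= sum_l B^(2l) = F^2 for signals bounded by 1:
   each layer multiplies the energy by at most B^2, and averaging over the g
   nodes costs a factor 1/g by Cauchy-Schwarz, which cancels |x|^2 <= g. *)

Section EuclideanVectors.
Variables (R : realType) (d : nat).
Implicit Types (u v w : 'cV[R]_d) (a : R).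

Lemma vdotC u v : vdot u v = vdot v u.
Proof. by apply: eq_bigr => k _; rewrite mulrC. Qed.

Lemma vdotDl u v w : vdot (u + v) w = vdot u w + vdot v w.
Proof. by rewrite /vdot -big_split; apply: eq_bigr => k _; rewrite mxE mulrDl. Qed.

Lemma vdotZl a u w : vdot (a *: u) w = a * vdot u w.
Proof. by rewrite /vdot mulr_sumr; apply: eq_bigr => k _; rewrite mxE mulrA. Qed.

Lemma vdot0l w : vdot 0 w = 0.
Proof. by rewrite /vdot big1 // => k _; rewrite mxE mul0r. Qed.

Lemma vdotBl u v w : vdot (u - v) w = vdot u w - vdot v w.
Proof. by rewrite vdotDl -scaleN1r vdotZl mulN1r. Qed.

Lemma vdotDr u v w : vdot w (u + v) = vdot w u + vdot w v.
Proof. by rewrite vdotC vdotDl !(vdotC w). Qed.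

Lemma vdotZr a u w : vdot w (a *: u) = a * vdot w u.
Proof. by rewrite vdotC vdotZl vdotC. Qed.

Lemma vdotBr u v w : vdot w (u - v) = vdot w u - vdot w v.
Proof. by rewrite vdotC vdotBl !(vdotC w). Qed.

Lemma vdot_suml n (F : 'I_n -> 'cV[R]_d) w :
  vdot (\sum_(i < n) F i) w = \sum_(i < n) vdot (F i) w.
Proof. by apply: (big_morph (fun u => vdot u w)) => [u v|]; rewrite ?vdotDl ?vdot0l. Qed.

Lemma vdot_sumr n (F : 'I_n -> 'cV[R]_d) w :
  vdot w (\sum_(i < n) F i) = \sum_(i < n) vdot w (F i).
Proof. by rewrite vdotC vdot_suml; apply: eq_bigr => i _; rewrite vdotC. Qed.

Lemma vdotE u v : vdot u v = (u^T *m v) 0 0.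
Proof. by rewrite mxE; apply: eq_bigr => k _; rewrite mxE. Qed.

Lemma vdotxx_ge0 u : 0 <= vdot u u.
Proof. by apply: sumr_ge0 => k _; rewrite -expr2 sqr_ge0. Qed.

Lemma vdotxx_eq0 u : vdot u u = 0 -> u = 0.
Proof.
move=> /eqP; rewrite psumr_eq0 => [/allP u0|k _]; last by rewrite -expr2 sqr_ge0.
apply/matrixP => k j; rewrite (ord1 j) mxE.
by have /u0 := mem_index_enum k; rewrite /= -expr2 sqrf_eq0 => /eqP.
Qed.

Lemma vnorm_ge0 u : 0 <= vnorm u.
Proof. exact: sqrtr_ge0. Qed.

Lemma vnorm_sqr u : vnorm u ^+ 2 = vdot u u.
Proof. by rewrite sqr_sqrtr // vdotxx_ge0. Qed.

Lemma vnorm0 : vnorm (0 : 'cV[R]_d) = 0.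
Proof. by rewrite /vnorm vdot0l sqrtr0. Qed.

Lemma vdot_CauchySchwarz u v : vdot u v ^+ 2 <= vdot u u * vdot v v.
Proof.
have [v0|vNZ] := eqVneq (vdot v v) 0.
  by rewrite v0 (vdotxx_eq0 v0) vdotC vdot0l expr0n mulr0.
have v_gt0 : 0 < vdot v v by rewrite lt_def vNZ vdotxx_ge0.
have := vdotxx_ge0 (vdot v v *: u - vdot u v *: v).
rewrite !(vdotBl, vdotBr, vdotZl, vdotZr) (vdotC v u) => ge0.
rewrite -subr_ge0 -(pmulr_rge0 (_ - _) v_gt0); nra.
Qed.

Lemma vdot_le_vnorm u v : vdot u v <= vnorm u * vnorm v.
Proof.
apply: le_trans (ler_norm _) _.
rewrite -sqrtr_sqr /vnorm -sqrtrM ?vdotxx_ge0 // ler_sqrt ?vdot_CauchySchwarz //.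
by rewrite mulr_ge0 ?vdotxx_ge0.
Qed.

Lemma vnormZ a u : vnorm (a *: u) = `|a| * vnorm u.
Proof. by rewrite /vnorm vdotZl vdotZr mulrA -expr2 sqrtrM ?sqr_ge0 // sqrtr_sqr. Qed.

Lemma ler_vnormD u v : vnorm (u + v) <= vnorm u + vnorm v.
Proof.
rewrite -(ler_pXn2r (_ : (0 < 2)%N)) ?nnegrE ?addr_ge0 ?vnorm_ge0 //.
rewrite vnorm_sqr sqrrD !vnorm_sqr vdotDl !vdotDr (vdotC v u).
have := vdot_le_vnorm u v; lra.
Qed.

Lemma vnormN u : vnorm (- u) = vnorm u.
Proof. by rewrite -scaleN1r vnormZ normrN1 mul1r. Qed.

Lemma ler_vnormB u v : vnorm (u - v) <= vnorm u + vnorm v.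
Proof. by rewrite -(vnormN v) ler_vnormD. Qed.

Lemma ler_vnorm_sum n (F : 'I_n -> 'cV[R]_d) :
  vnorm (\sum_(i < n) F i) <= \sum_(i < n) vnorm (F i).
Proof.
elim/big_rec2: _ => [|i a u _ IH]; first by rewrite vnorm0.
by apply: le_trans (ler_vnormD _ _) _; rewrite lerD2l.
Qed.

Lemma vdot_map_normr v :
  vdot (map_mx (fun a => `|a|) v) (map_mx (fun a => `|a|) v) = vdot v v.
Proof. by apply: eq_bigr => k _; rewrite !mxE -!expr2 real_normK // num_real. Qed.

End EuclideanVectors.

Section RealCalculus.
Variable R : realType.
Implicit Types (f df d2f : R -> R) (a b c e l s t u x gam : R).

Definition convex_fun f :=
  forall a b t, 0 <= t <= 1 -> f (t * a + (1 - t) * b) <= t * f a + (1 - t) * f b.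

Lemma convex_fun_comp_oppr f : convex_fun f -> convex_fun (f \o -%R).
Proof. by move=> f_cvx a b t t01; rewrite /= opprD -!mulrN f_cvx. Qed.

Lemma lipschitz_const_ge0 f gam :
  (forall a b, `|f a - f b| <= gam * `|a - b|) -> 0 <= gam.
Proof.
move=> f_lip; apply: le_trans (normr_ge0 (f 1 - f 0)) _.
by have := f_lip 1 0; rewrite subr0 normr1 mulr1.
Qed.

Lemma is_derive_le_rquot f x l c e : 0 < e -> is_derive x 1 f l ->
  (forall h, 0 < h < e -> h^-1 * (f (h + x) - f x) <= c) -> l <= c.
Proof.
move=> e_gt0 fdf quot_le.
have dfx : derivable f x 1 by case: fdf.
rewrite -(@derive_val _ _ _ _ _ _ _ fdf) ['D_1 f x]cvg_at_rightE //.
apply: limr_le.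
  rewrite -(cvg_at_rightE (fun h : R => h^-1 *: ((f \o shift x) _ - f x))) //.
  apply: cvg_trans dfx; apply: cvg_app.
  by move=> A [r r0 Ar]; exists r => // z zr z0; apply: Ar => //; exact/lt0r_neq0.
near=> h.
rewrite /= /GRing.scale /= mulr1; apply: quot_le; apply/andP; split.
  by near: h; exists 1 => /=.
near: h; exists e => //= z; rewrite /ball_ /= sub0r normrN => ze z0.
by rewrite gtr0_norm in ze.
Unshelve. all: by end_near. Qed.

Lemma is_derive_comp_affine f df a b t : (forall s, is_derive s 1 f (df s)) ->
  is_derive t 1 (fun s => f (a + s * b)) (df (a + t * b) * b).
Proof.
move=> fdf; apply: (is_derive1_comp (fdf _)); apply: is_derive_eq.
by rewrite add0r mul1r scaler0 add0r /GRing.scale /= mulr1.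
Qed.

Lemma convex_derive_le_slope f df a b : convex_fun f ->
  (forall s, is_derive s 1 f (df s)) -> a < b -> df a <= (f b - f a) / (b - a).
Proof.
move=> f_cvx fdf ab; have ba_gt0 : 0 < b - a by rewrite subr_gt0.
apply: (is_derive_le_rquot ba_gt0 (fdf a)) => h /andP[h_gt0 hb].
set t := h / (b - a).
have t01 : 0 <= t <= 1 by rewrite /t ler_pdivrMr // mul1r (ltW hb) divr_ge0 // ltW.
have -> : h + a = t * b + (1 - t) * a by rewrite /t; field; rewrite gt_eqF.
rewrite mulrC ler_pdivrMr // (_ : _ / _ * h = t * (f b - f a)).
  by have := f_cvx b a t t01; lra.
by rewrite /t; field; rewrite gt_eqF.
Qed.

Lemma convex_derive_nondecreasing f df : convex_fun f ->
  (forall s, is_derive s 1 f (df s)) -> {homo df : a b / a <= b}.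
Proof.
move=> f_cvx fdf a b; rewrite le_eqVlt => /predU1P[-> // | ab].
apply: le_trans (convex_derive_le_slope f_cvx fdf ab) _.
(* the slope bound at the left end, applied to s |-> f (- s), gives the one at b *)
have fNdf s : is_derive s 1 (f \o -%R) (df (- s) * -1).
  exact: is_derive1_comp (fdf (- s)) (is_deriveNid s 1).
have := convex_derive_le_slope (convex_fun_comp_oppr f_cvx) fNdf (_ : - b < - a).
rewrite ltrN2 /= !opprK mulrN1 lerNl => /(_ ab); apply: le_trans.
by rewrite -mulNr opprB [- a + b]addrC.
Qed.

Lemma convex_derive2_ge0 f df d2f : convex_fun f ->
  (forall s, is_derive s 1 f (df s)) -> (forall s, is_derive s 1 df (d2f s)) ->
  forall s, 0 <= d2f s.
Proof.
move=> f_cvx fdf dfd2f s; rewrite -oppr_le0.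
apply: (is_derive_le_rquot ltr01 (is_deriveN (dfd2f s))) => h /andP[h_gt0 _].
rewrite pmulr_rle0 ?invr_gt0 // subr_le0 /= lerN2.
by apply: convex_derive_nondecreasing f_cvx fdf _ _ _; rewrite lerDr ltW.
Qed.

Lemma MVT_between f df s u : (forall x, is_derive x 1 f (df x)) ->
  exists2 c, `|c - s| <= `|u| & f (s + u) - f s = df c * u.
Proof.
move=> fdf.
have f_der z : derivable f z 1 by case: (fdf z).
have f_cont := derivable_within_continuous (fun z _ => f_der z).
have [u_ge0|u_lt0] := leP 0 u.
- have [|c] := MVT_segment (_ : s <= s + u) (fun x _ => fdf x) (f_cont _).
    by rewrite lerDl.
  rewrite in_itv /= => /andP[sc cu] ->; exists c; last by rewrite (addrC s) addrK.
  by rewrite !ger0_norm ?subr_ge0 //; lra.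
- have [|c] := MVT_segment (_ : s + u <= s) (fun x _ => fdf x) (f_cont _).
    by rewrite gerDl ltW.
  rewrite in_itv /= => /andP[uc cs] E; exists c; last by rewrite -opprB E; ring.
  by rewrite ler0_norm ?subr_le0 // ltr0_norm //; lra.
Qed.

Lemma taylor1_remainder_le f df gam s u : (forall x, is_derive x 1 f (df x)) ->
  (forall a b, `|df a - df b| <= gam * `|a - b|) ->
  `|f (s + u) - f s - df s * u| <= gam * u ^+ 2.
Proof.
move=> fdf df_lip; have [c cs ->] := MVT_between s u fdf.
rewrite -mulrBl normrM; apply: le_trans (ler_wpM2r (normr_ge0 u) (df_lip c s)) _.
rewrite -mulrA ler_wpM2l ?(lipschitz_const_ge0 df_lip) //.
by rewrite -real_normK ?num_real // expr2 ler_wpM2r.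
Qed.

End RealCalculus.

Section CoerciveMatrix.
Variables (R : realType) (d : nat) (M : 'M[R]_d) (k : R).
Hypotheses (k_gt0 : 0 < k) (M_coercive : forall c, k * vdot c c <= vdot c (M *m c)).

Lemma coercive_unitmx : M \in unitmx.
Proof.
rewrite unitmxE unitfE; apply/negP => /det0P[r rNZ rM0].
have := M_coercive r^T; rewrite [vdot _ (M *m _)]vdotE trmxK mulmxA rM0 mul0mx mxE.
rewrite pmulr_rle0 // => rr_le0.
have rT0 : r^T = 0 by apply/vdotxx_eq0/eqP; rewrite eq_le rr_le0 vdotxx_ge0.
by move: rNZ; rewrite -[r]trmxK rT0 trmx0 eqxx.
Qed.

Lemma coercive_vnorm_le c : k * vnorm c <= vnorm (M *m c).
Proof.
have [c0|c_gt0] := eqVneq (vnorm c) 0; first by rewrite c0 mulr0 vnorm_ge0.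
have {c_gt0}c_gt0 : 0 < vnorm c by rewrite lt_def c_gt0 vnorm_ge0.
rewrite -(ler_pM2r c_gt0) -mulrA -expr2 vnorm_sqr.
by apply: le_trans (M_coercive c) _; rewrite mulrC vdot_le_vnorm.
Qed.

End CoerciveMatrix.

Section Objective.
Variables (R : realType) (Y : Type) (n d : nat).
Variables (lam : R) (Z : 'I_n -> 'cV[R]_d) (y : 'I_n -> Y).
Implicit Types (i : 'I_n) (s t : R) (w v c : 'cV[R]_d) (ell dl d2l : R -> Y -> R).

Lemma gradL_eq0_at_min ell dl w :
  (forall i s, is_derive s 1 (fun r => ell r (y i)) (dl s (y i))) ->
  (forall w', Lobj ell lam Z y w <= Lobj ell lam Z y w') ->
  gradL dl lam Z y w = 0.
Proof.
move=> ell_dl w_min; set u := gradL dl lam Z y w.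
pose A i := vdot w (Z i); pose B i := vdot u (Z i).
pose phi := \sum_(i < n) (fun t : R => ell (A i + t * B i) (y i) +
   lam / 2 * (vdot w w + t * (2 * vdot w u) + t ^+ 2 * vdot u u)).
have phiE t : phi t = Lobj ell lam Z y (w + t *: u).
  rewrite /phi fct_sumE /Lobj; apply: eq_bigr => i _.
  rewrite vnorm_sqr !(vdotDl, vdotDr, vdotZl, vdotZr) (vdotC u w).
  by congr (_ + _); ring.
have phi_der t : is_derive t 1 phi (\sum_(i < n) (dl (A i + t * B i) (y i) * B i +
     lam / 2 * (2 * vdot w u + 2 * t * vdot u u))).
  apply: is_derive_sum => i; apply: is_deriveD; first exact: is_derive_comp_affine.
  by apply: is_derive_eq; rewrite !scaler0 !add0r mul1r /GRing.scale /=; ring.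
have phi_der0 : is_derive (0 : R) 1 phi 0.
  apply: (@derive1_at_min _ phi (-1) 1 0).
  - by rewrite (le_trans (lerN10 _)) // ler01.
  - by move=> t _; case: (phi_der t).
  - by rewrite in_itv /= ltrN10 ltr01.
  - by move=> t _; rewrite !phiE scale0r addr0; exact: w_min.
(* phi'(0) = <u, gradL w> = |u|^2 *)
have := @derive_val _ _ _ _ _ _ _ (phi_der 0).
rewrite (@derive_val _ _ _ _ _ _ _ phi_der0) => phi'0.
apply: vdotxx_eq0; rewrite {}phi'0 {2}/u /gradL vdot_sumr; apply: eq_bigr => i _.
by rewrite vdotDr !vdotZr /B /A mul0r addr0 mulr0 mul0r addr0 (vdotC w u); field.
Qed.

Lemma hessL_mulmx d2l w v : hessL d2l lam Z y w *m v =
  \sum_(i < n) ((d2l (vdot w (Z i)) (y i) * vdot (Z i) v) *: Z i + lam *: v).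
Proof.
rewrite /hessL mulmx_suml; apply: eq_bigr => i _.
rewrite mulmxDl mul_scalar_mx -scalemxAl -mulmxA.
have -> : (Z i)^T *m v = (vdot (Z i) v)%:M.
  apply/matrixP => a b; rewrite (ord1 a) (ord1 b) !mxE /= mulr1n.
  by apply: eq_bigr => j _; rewrite mxE.
by rewrite mul_mx_scalar scalerA.
Qed.

Lemma hessL_coercive d2l w c : (forall i s, 0 <= d2l s (y i)) ->
  lam * n%:R * vdot c c <= vdot c (hessL d2l lam Z y w *m c).
Proof.
move=> d2l_ge0; rewrite hessL_mulmx vdot_sumr.
rewrite (_ : lam * n%:R * vdot c c = \sum_(i < n) lam * vdot c c); last first.
  by rewrite sumr_const card_ord mulrAC mulr_natr.
apply: ler_sum => i _; rewrite vdotDr !vdotZr lerDr (vdotC c (Z i)).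
by rewrite -mulrA mulr_ge0 // -expr2 sqr_ge0.
Qed.

Lemma gradL_taylor_le dl d2l gam F w v :
  (forall i s, is_derive s 1 (fun r => dl r (y i)) (d2l s (y i))) ->
  (forall i s t, `|d2l s (y i) - d2l t (y i)| <= gam * `|s - t|) ->
  (forall i, vnorm (Z i) <= F) ->
  vnorm (gradL dl lam Z y (w + v) - gradL dl lam Z y w - hessL d2l lam Z y w *m v)
    <= n%:R * (gam * F ^+ 3 * vnorm v ^+ 2).
Proof.
move=> dl_d2l d2l_lip Z_le; rewrite hessL_mulmx /gradL -!sumrB.
apply: le_trans (ler_vnorm_sum _) _.
rewrite (_ : n%:R * _ = \sum_(i < n) gam * F ^+ 3 * vnorm v ^+ 2); last first.
  by rewrite sumr_const card_ord mulr_natl.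
apply: ler_sum => i _; set s := vdot w (Z i); set u := vdot (Z i) v.
have -> : dl (vdot (w + v) (Z i)) (y i) *: Z i + lam *: (w + v)
          - (dl s (y i) *: Z i + lam *: w) - (d2l s (y i) * u *: Z i + lam *: v)
        = (dl (s + u) (y i) - dl s (y i) - d2l s (y i) * u) *: Z i.
  by rewrite vdotDl (vdotC v); apply/matrixP => a b; rewrite !mxE; ring.
have gam_ge0 := lipschitz_const_ge0 (d2l_lip i).
have F_ge0 : 0 <= F := le_trans (vnorm_ge0 _) (Z_le i).
have u2_le : u ^+ 2 <= F ^+ 2 * vnorm v ^+ 2.
  apply: le_trans (vdot_CauchySchwarz _ _) _.
  rewrite -!vnorm_sqr ler_wpM2r ?sqr_ge0 //.
  by rewrite ler_pXn2r ?nnegrE ?vnorm_ge0.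
have r_le := taylor1_remainder_le s u (dl_d2l i) (d2l_lip i).
rewrite vnormZ; apply: le_trans (ler_wpM2r (vnorm_ge0 _) r_le) _.
rewrite -[gam * u ^+ 2 * _]mulrA -[gam * F ^+ 3 * _]mulrA ler_wpM2l //.
rewrite [F ^+ 3]exprSr [F ^+ 2 * F * _]mulrAC.
exact: ler_pM (sqr_ge0 _) (vnorm_ge0 _) u2_le (Z_le i).
Qed.

Lemma gradL_newton_step_le dl d2l gam F w : 0 < lam -> (0 < n)%N ->
  (forall i s, is_derive s 1 (fun r => dl r (y i)) (d2l s (y i))) ->
  (forall i s t, `|d2l s (y i) - d2l t (y i)| <= gam * `|s - t|) ->
  (forall i s, 0 <= d2l s (y i)) ->
  (forall i, vnorm (Z i) <= F) ->
  vnorm (gradL dl lam Z y (w - invmx (hessL d2l lam Z y w) *m gradL dl lam Z y w))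
    <= n%:R * (gam * F ^+ 3 * (vnorm (gradL dl lam Z y w) / (lam * n%:R)) ^+ 2).
Proof.
move=> lam_gt0 n_gt0 dl_d2l d2l_lip d2l_ge0 Z_le.
set H := hessL d2l lam Z y w; set G := gradL dl lam Z y w.
have lamn_gt0 : 0 < lam * n%:R by rewrite mulr_gt0 ?ltr0n.
have H_coercive c : lam * n%:R * vdot c c <= vdot c (H *m c) by exact: hessL_coercive.
set v := - (invmx H *m G).
have Hv : H *m v = - G.
  by rewrite mulmxN mulmxA mulmxV ?mul1mx // (coercive_unitmx lamn_gt0 H_coercive).
have v_le : vnorm v <= vnorm G / (lam * n%:R).
  by rewrite ler_pdivlMr // mulrC -(vnormN G) -Hv coercive_vnorm_le.
have -> : gradL dl lam Z y (w + v) = gradL dl lam Z y (w + v) - G - H *m v.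
  by rewrite Hv opprK subrK.
apply: le_trans (gradL_taylor_le w v dl_d2l d2l_lip Z_le) _.
have gam_ge0 := lipschitz_const_ge0 (d2l_lip (Ordinal n_gt0)).
have F_ge0 := le_trans (vnorm_ge0 _) (Z_le (Ordinal n_gt0)).
rewrite ler_wpM2l ?ler0n // ler_wpM2l ?mulr_ge0 ?exprn_ge0 //.
have bound_ge0 : 0 <= vnorm G / (lam * n%:R) by rewrite divr_ge0 ?vnorm_ge0 ?ltW.
by rewrite ler_pXn2r ?nnegrE ?vnorm_ge0.
Qed.

Lemma gradL_sub_le dl C (Z' : 'I_n -> 'cV[R]_d) (k : 'I_n -> nat) w :
  (forall i, vnorm (dl (vdot w (Z i)) (y i) *: Z i) <= C /\
             vnorm (dl (vdot w (Z' i)) (y i) *: Z' i) <= C) ->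
  (forall i, k i = 0%N -> Z' i = Z i) ->
  vnorm (gradL dl lam Z y w - gradL dl lam Z' y w) <= 2 * C * (\sum_(i < n) k i)%:R.
Proof.
move=> C_bound Z'_eq; rewrite /gradL -sumrB natr_sum mulr_sumr.
apply: le_trans (ler_vnorm_sum _) _; apply: ler_sum => i _.
rewrite opprD addrACA subrr addr0.
have [k0|k_gt0] := posnP (k i); first by rewrite Z'_eq // subrr vnorm0 k0 mulr0.
have [Z_le Z'_le] := C_bound i.
have C_ge0 : 0 <= C := le_trans (vnorm_ge0 _) Z_le.
apply: le_trans (ler_vnormB _ _) (le_trans (lerD Z_le Z'_le) _).
have -> : C + C = 2 * C * 1 by ring.
by rewrite ler_wpM2l ?mulr_ge0 // ler1n.
Qed.

End Objective.

Section TupleSums.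
Variable R : realType.

Lemma sum_tuple0 (T : finType) (F : 0.-tuple T -> R) :
  \sum_(t : 0.-tuple T) F t = F [tuple].
Proof. by rewrite (big_pred1 [tuple]) // => t /=; rewrite [t]tuple0; apply/esym/eqP. Qed.

Lemma sum_tupleS (T : finType) l (F : l.+1.-tuple T -> R) :
  \sum_(t : l.+1.-tuple T) F t = \sum_(j : T) \sum_(t : l.-tuple T) F [tuple of j :: t].
Proof.
rewrite pair_bigA /=.
rewrite (reindex (fun p : T * l.-tuple T => [tuple of p.1 :: p.2])) //=.
exists (fun t : l.+1.-tuple T => (thead t, [tuple of behead t])) => [[j t] _|t _].
  by rewrite /= theadE; congr pair; exact: val_inj.
by rewrite /= [RHS]tuple_eta.
Qed.

End TupleSums.

Section ScatteringEnergy.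
Variables (R : realType) (L J g : nat) (h : 'I_J -> R -> R) (S : 'M[R]_g) (B : R).
Hypothesis frame_le : forall v : 'cV[R]_g,
  \sum_(j < J) vnorm (wav (h j) S *m v) ^+ 2 <= B ^+ 2 * vnorm v ^+ 2.

Lemma gst_Phi_energy_le l (x : 'cV[R]_g) :
  \sum_(t : l.-tuple 'I_J) vdot (gst_Phi h S x t) (gst_Phi h S x t)
    <= B ^+ (2 * l) * vdot x x.
Proof.
elim: l x => [|l IH] x; first by rewrite sum_tuple0 muln0 expr0 mul1r.
rewrite sum_tupleS.
apply: (@le_trans _ _
  (\sum_(j < J) B ^+ (2 * l) * vdot (gst_step h S x j) (gst_step h S x j))).
  by apply: ler_sum => j _; exact: IH.
rewrite -mulr_sumr mulnS exprD -mulrA mulrCA.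
apply: ler_wpM2l; first by rewrite exprM exprn_ge0 // sqr_ge0.
have := frame_le x; rewrite vnorm_sqr; apply: le_trans.
by apply: ler_sum => j _; rewrite vdot_map_normr vnorm_sqr.
Qed.

Lemma gst_coef_sqr_le (x : 'cV[R]_g) (p : seq 'I_J) : (0 < g)%N ->
  gst_coef h S x p ^+ 2 <= vdot (gst_Phi h S x p) (gst_Phi h S x p) / g%:R.
Proof.
move=> g_gt0; set P := gst_Phi h S x p; pose one := (const_mx 1 : 'cV[R]_g).
have sumP : \sum_(k < g) P k 0 = vdot P one by apply: eq_bigr => k _; rewrite mxE mulr1.
have one2 : vdot one one = g%:R.
  rewrite /vdot (eq_bigr (fun _ => 1)) ?sumr_const ?card_ord // => k _.
  by rewrite mxE mulr1.
have gNZ : (g%:R : R) != 0 by rewrite pnatr_eq0 -lt0n.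
rewrite /gst_coef -/P sumP -(@ler_pM2r _ (g%:R ^+ 2)) ?exprn_gt0 ?ltr0n //.
have -> : (g%:R^-1 * vdot P one) ^+ 2 * g%:R ^+ 2 = vdot P one ^+ 2 by field.
have -> : vdot P P / g%:R * g%:R ^+ 2 = vdot P P * vdot one one by rewrite one2; field.
exact: vdot_CauchySchwarz.
Qed.

Lemma vdot_gst (x : 'cV[R]_g) : vdot (gst L h S x) (gst L h S x) =
  \sum_(l < L) \sum_(t : l.-tuple 'I_J) gst_coef h S x t ^+ 2.
Proof.
rewrite (@sig_big_dep R 0 +%R _ (fun l : 'I_L => (l.-tuple 'I_J : finType)) predT
  (fun _ _ => true) (fun l (t : l.-tuple 'I_J) => gst_coef h S x t ^+ 2)) /=.
rewrite -[RHS]/(\sum_(p in predT) gst_coef h S x (tagged (p : gst_path L J)) ^+ 2).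
rewrite big_enum_val /vdot.
by apply: eq_bigr => k _; rewrite mxE expr2.
Qed.

Lemma vnorm_gst_le (x : 'cV[R]_g) : (0 < g)%N -> (forall k, `|x k 0| <= 1) ->
  vnorm (gst L h S x) <= Num.sqrt (\sum_(l < L) B ^+ (2 * l)).
Proof.
move=> g_gt0 x_le1; rewrite ler_sqrt ?sumr_ge0 // => [|l _]; last first.
  by rewrite exprM exprn_ge0 ?sqr_ge0.
have x2_le : vdot x x <= g%:R.
  rewrite /vdot -[g in g%:R]card_ord -sumr_const; apply: ler_sum => k _.
  by rewrite -expr2 -real_normK ?num_real // expr_le1.
rewrite vdot_gst; apply: ler_sum => l _.
apply: (@le_trans _ _ (\sum_(t : l.-tuple 'I_J)
  vdot (gst_Phi h S x t) (gst_Phi h S x t) / g%:R)).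
  by apply: ler_sum => t _; exact: gst_coef_sqr_le.
rewrite -mulr_suml ler_pdivrMr ?ltr0n //.
apply: le_trans (gst_Phi_energy_le l x) _.
by apply: ler_wpM2l; rewrite // exprM exprn_ge0 // sqr_ge0.
Qed.

End ScatteringEnergy.

Section NodeRemoval.
Variables (R : realType) (g : nat).

Lemma remove_shift_set0 (S : 'M[R]_g) : remove_shift finset.set0 S = S.
Proof. by apply/matrixP => a b; rewrite mxE !inE. Qed.

Lemma remove_signal_set0 (x : 'cV[R]_g) : remove_signal finset.set0 x = x.
Proof. by apply/matrixP => a b; rewrite mxE inE (ord1 b). Qed.

Lemma remove_signal_le1 (Rm : {set 'I_g}) (x : 'cV[R]_g) :
  (forall k, `|x k 0| <= 1) -> forall k, `|remove_signal Rm x k 0| <= 1.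
Proof. by move=> x_le1 k; rewrite mxE; case: ifP => _; rewrite ?normr0 ?ler01. Qed.

End NodeRemoval.

Unset Implicit Arguments.

Theorem corollary4p5
  (R : realType) (Y : Type) (n : nat) (g : 'I_n -> nat)
  (S : forall i : 'I_n, 'M[R]_(g i)) (x : forall i : 'I_n, 'cV[R]_(g i))
  (y : 'I_n -> Y)
  (L J : nat) (h : 'I_J -> R -> R) (A B : R)
  (ell dl d2l : R -> Y -> R) (lam C1 C2 gam1 gam2 : R)
  (Rm : forall i : 'I_n, {set 'I_(g i)}) (m : nat)
  (wstar : 'cV[R]_(npaths L J)) :
  (0 < L)%N -> (0 < J)%N ->
  (forall i, (S i)^T = S i) ->
  (* frame property of the wavelets, for every shift operator considered *)
  0 < A -> A <= B ->
  (forall i (v : 'cV[R]_(g i)),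
      A ^+ 2 * vnorm v ^+ 2 <= \sum_(j < J) vnorm (wav (h j) (S i) *m v) ^+ 2
   /\ \sum_(j < J) vnorm (wav (h j) (S i) *m v) ^+ 2 <= B ^+ 2 * vnorm v ^+ 2) ->
  (forall i (v : 'cV[R]_(g i)),
      A ^+ 2 * vnorm v ^+ 2
        <= \sum_(j < J) vnorm (wav (h j) (remove_shift (Rm i) (S i)) *m v) ^+ 2
   /\ \sum_(j < J) vnorm (wav (h j) (remove_shift (Rm i) (S i)) *m v) ^+ 2
        <= B ^+ 2 * vnorm v ^+ 2) ->
  (* loss: convex, twice differentiable in s, with derivatives dl, d2l *)
  (forall (yv : Y) (a b t : R), 0 <= t <= 1 ->
      ell (t * a + (1 - t) * b) yv <= t * ell a yv + (1 - t) * ell b yv) ->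
  (forall (s : R) (yv : Y), is_derive s 1 (fun u => ell u yv) (dl s yv)) ->
  (forall (s : R) (yv : Y), is_derive s 1 (fun u => dl u yv) (d2l s yv)) ->
  0 < lam ->
  let Z := fun i => gst L h (S i) (x i) in
  let Z' := fun i => gst L h (remove_shift (Rm i) (S i))
                              (remove_signal (Rm i) (x i)) in
  (* (1) *)
  (forall i (w : 'cV[R]_(npaths L J)),
      vnorm (dl (vdot w (Z i)) (y i) *: Z i) <= C1 /\
      vnorm (dl (vdot w (Z' i)) (y i) *: Z' i) <= C1) ->
  (* (2) *)
  (forall i (w : 'cV[R]_(npaths L J)),
      `|dl (vdot w (Z i)) (y i)| <= C2 /\ `|dl (vdot w (Z' i)) (y i)| <= C2) ->
  (* (3) *)
  (forall i (s t : R), `|dl s (y i) - dl t (y i)| <= gam1 * `|s - t|) ->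
  (* (4) *)
  (forall i (s t : R), `|d2l s (y i) - d2l t (y i)| <= gam2 * `|s - t|) ->
  (* (5) *)
  (forall i (k : 'I_(g i)), `|x i k 0| <= 1) ->
  (* m nodes removed in total, m < min_i g_i *)
  m = (\sum_(i < n) #|Rm i|)%N ->
  (forall i, (m < g i)%N) ->
  (* w* minimizes L(., D) *)
  (forall w, Lobj ell lam Z y wstar <= Lobj ell lam Z y w) ->
  let Hw := hessL d2l lam Z' y wstar in
  let Delta := gradL dl lam Z y wstar - gradL dl lam Z' y wstar in
  let w' := wstar + invmx Hw *m Delta in
  let F := Num.sqrt (\sum_(l < L) B ^+ (2 * l)) in
  vnorm (gradL dl lam Z' y w')
    <= 4 * gam2 * (m%:R) ^+ 2 * C1 ^+ 2 * F ^+ 3 / (lam ^+ 2 * n%:R).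
Proof.
move=> _ _ _ _ _ _ frame' ell_cvx ell_dl dl_d2l lam_gt0 Z Z' C1_bound _ _ d2l_lip
  x_le1 m_def m_lt_g wstar_min; cbv zeta.
have [n0|n_gt0] := posnP n.
  by subst n; rewrite /gradL big_ord0 vnorm0 mulr0 invr0 mulr0.
have d2l_ge0 i s : 0 <= d2l s (y i).
  exact: (@convex_derive2_ge0 R (ell^~ (y i)) (dl^~ (y i)) (d2l^~ (y i)) (ell_cvx (y i))).
set F := Num.sqrt _.
have Z'_le i : vnorm (Z' i) <= F.
  rewrite /Z' /F; apply: (vnorm_gst_le _ (fun v => proj2 (frame' i v))).
    exact: leq_ltn_trans (leq0n m) (m_lt_g i).
  exact: remove_signal_le1.
have grad0 : gradL dl lam Z y wstar = 0.
  exact: gradL_eq0_at_min (fun i s => ell_dl s (y i)) wstar_min.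
have grad'_le : vnorm (gradL dl lam Z' y wstar) <= 2 * C1 * m%:R.
  rewrite -vnormN -sub0r -grad0 m_def; apply: gradL_sub_le => [//|i /eqP].
  rewrite cards_eq0 => /eqP Rm0.
  by rewrite /Z' /Z Rm0 remove_shift_set0 remove_signal_set0.
rewrite grad0 sub0r mulmxN.
apply: le_trans (gradL_newton_step_le wstar lam_gt0 n_gt0 (fun i s => dl_d2l s (y i))
  d2l_lip d2l_ge0 Z'_le) _.
have gam2_ge0 := lipschitz_const_ge0 (d2l_lip (Ordinal n_gt0)).
have lamn_gt0 : 0 < lam * n%:R by rewrite mulr_gt0 ?ltr0n.
rewrite (_ : 4 * gam2 * m%:R ^+ 2 * C1 ^+ 2 * F ^+ 3 / (lam ^+ 2 * n%:R) =
  n%:R * (gam2 * F ^+ 3 * (2 * C1 * m%:R / (lam * n%:R)) ^+ 2)); last first.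
  by field; rewrite !gt_eqF ?ltr0n.
rewrite ler_wpM2l ?ler0n // ler_wpM2l ?mulr_ge0 ?exprn_ge0 ?sqrtr_ge0 //.
have C1m_ge0 : 0 <= 2 * C1 * m%:R := le_trans (vnorm_ge0 _) grad'_le.
rewrite ler_pXn2r ?nnegrE ?divr_ge0 ?vnorm_ge0 ?(ltW lamn_gt0) //.
by rewrite ler_wpM2r ?invr_ge0 ?(ltW lamn_gt0).
Qed.
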